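(* Consider a graphical economy with resale (as in the context) satisfying Assumptions 2 and 3 stated in the context. Let $(\mathbf{x},\mathbf{y},\mathbf{p})$ be a $\mathbf{b}$-resale quasi-equilibrium, let $i\in[m]$ be a rational agent, and suppose there is a trade path between $i$ and an agent $j\in[m]$. Let $k\in[\ell]$. If either (i) $i$ is non-satiable in $k$, or (ii) $b_i>0$ and $p^i_k>0$, then $p^{\hat j}_k>0$ for all $\hat j\in P(i,j)$.
   Context: Setting. There are goods $[\ell]$ (divisible) and agents $[m]$ that are the nodes of an undirected graph $G=([m],E)$. Write $i\simeq j$ if $i=j$ or $\{i,j\}\in E$, and $i\sim j$ if $i\simeq j$ and $i\ne j$. Agent $i$ has an endowment $\mathbf{e}^i\in\mathbb{R}^\ell_+$, a utility $u_i:\mathbb{R}^\ell_+\to\mathbb{R}_+$, and a resale bound $b_i\ge0$; $\mathbf{b}=(b_i)_i$. Local price vectors $\mathbf{p}^i\in\mathbb{R}^\ell_+$; consumption plans $\mathbf{x}^{ij}$ and resale plans $\mathbf{y}^{ij}$ in $\mathbb{R}^\ell_+$ (what $i$ buys from $j$ to consume / to resell), zero unless $j\simeq i$. A demand system $D:\mathbb{R}_+^{m\times\ell}\times\mathbb{R}_+\to2^{\mathbb{R}_+^{m\times\ell}}$ is normalized if $D(\mathbf{p},0)=\{\mathbf{0}\}$. $C_i(\mathbf{p},\beta)$ = plans $\mathbf{x}^i$ maximizing $u_i(\sum_{j\simeq i}\mathbf{x}^{ij})$ subject to $\sum_{j\simeq i}\mathbf{p}^j\cdot\mathbf{x}^{ij}\le\beta$.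 $R_i(\mathbf{p},b_i)$ = resale plans maximizing $\sum_{j\simeq i}(\mathbf{p}^i-\mathbf{p}^j)\cdot\mathbf{y}^{ij}$ over a feasible set $\mathcal{Y}_i(\mathbf{p},b_i)$. Wealth $\beta_i=\mathbf{p}^i\cdot\mathbf{e}^i+\sum_{j\simeq i}(\mathbf{p}^i-\mathbf{p}^j)\cdot\mathbf{y}^{ij}$. Agent $i$ is rational if $\mathbf{y}^i\in R_i(\mathbf{p},b_i)$ and $\mathbf{x}^i\in C_i(\mathbf{p},\beta_i)$. A $\mathbf{b}$-resale quasi-equilibrium is a triple with $\sum_{i,k}p^i_k=1$, local clearing $\sum_{j\simeq i}\mathbf{x}^{ji}+\sum_{j\simeq i}\mathbf{y}^{ji}=\mathbf{e}^i+\sum_{j\simeq i}\mathbf{y}^{ij}$ and $\mathbf{y}^i\in R_i(\mathbf{p},b_i)$ for all $i$, $\mathbf{x}^i\in C_i(\mathbf{p},\beta_i)$ whenever $\beta_i>0$, and $\sum_{j\simeq i}\mathbf{p}^j\cdot\mathbf{x}^{ij}\le\beta_i$ whenever $\beta_i=0$. Agent $i$ is non-satiable in $k$ if $u_i$ is strictly monotone increasing in coordinate $k$. A trade path between $i$ and $j$ is a path in $G$ from $i$ to $j$ all of whose nodes other than $i,j$ have positive resale bound; $P(i,j)$ is the set of agents on some trade path between $i$ and $j$, including $i$ and $j$. Assumption 2: each $R_i$ is normalized with closed convex feasible set $\mathcal{Y}_i(\mathbf{p},b_i)$, and for each $i$ with $b_i>0$: (i) if some $j\sim i$, $k$ have $0<p^j_k<p^i_k$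 then $\|\mathbf{y}^i\|_1>0$ for all $\mathbf{y}^i\in R_i(\mathbf{p},b_i)$; (ii) if some $j\sim i$, $k$ have $0=p^j_k<p^i_k$ then $R_i(\mathbf{p},b_i)=\emptyset$. Assumption 3: for every agent $i$, $b_i>0$ or all coordinates of $\mathbf{e}^i$ are strictly positive. *)

From HB Require Import structures.
From mathcomp Require Import all_boot all_order all_algebra.
From mathcomp Require Import all_classical all_reals all_analysis.
Set Implicit Arguments. Unset Strict Implicit. Unset Printing Implicit Defensive.
Import Order.TTheory GRing.Theory Num.Theory numFieldNormedType.Exports.
Local Open Scope ring_scope.
Local Open Scope classical_set_scope.

(* Agents are 'I_m, goods are 'I_l, R : realType.
   A price system is a matrix p : 'M[R]_(m,l) with p i k = p^i_k.
   A (consumption or resale) plan of agent i is a matrix X : 'M[R]_(m,l)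
   with X j k = x^{ij}_k (resp. y^{ij}_k). *)

Section Economy.
Variables (R : realType) (m l : nat).

Definition simeq (adj : rel 'I_m) (i j : 'I_m) : bool := (i == j) || adj i j.
Definition sim (adj : rel 'I_m) (i j : 'I_m) : bool := simeq adj i j && (i != j).

Definition simple_graph (adj : rel 'I_m) : Prop :=
  (forall i j, adj i j = adj j i) /\ (forall i, ~~ adj i i).

Definition nonneg_mx (p : 'M[R]_(m, l)) : Prop := forall i k, 0 <= p i k.

Definition is_plan (adj : rel 'I_m) (i : 'I_m) (X : 'M[R]_(m, l)) : Prop :=
  forall j k, 0 <= X j k /\ (~~ simeq adj i j -> X j k = 0).

Definition bundle (adj : rel 'I_m) (i : 'I_m) (X : 'M[R]_(m, l)) : 'rV[R]_l :=
  \row_k (\sum_(j | simeq adj i j) X j k).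

Definition cost (adj : rel 'I_m) (p : 'M[R]_(m, l)) (i : 'I_m) (X : 'M[R]_(m, l)) : R :=
  \sum_(j | simeq adj i j) \sum_k p j k * X j k.

Definition profit (adj : rel 'I_m) (p : 'M[R]_(m, l)) (i : 'I_m) (Y : 'M[R]_(m, l)) : R :=
  \sum_(j | simeq adj i j) \sum_k (p i k - p j k) * Y j k.

Definition wealth (adj : rel 'I_m) (e p : 'M[R]_(m, l)) (i : 'I_m) (Y : 'M[R]_(m, l)) : R :=
  \sum_k p i k * e i k + profit adj p i Y.

Definition Cdem (adj : rel 'I_m) (u : 'I_m -> 'rV[R]_l -> R)
    (p : 'M[R]_(m, l)) (i : 'I_m) (beta : R) : set 'M[R]_(m, l) :=
  [set X | [/\ is_plan adj i X, cost adj p i X <= beta &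
     forall X', is_plan adj i X' -> cost adj p i X' <= beta ->
       u i (bundle adj i X') <= u i (bundle adj i X)]].

Definition Rdem (adj : rel 'I_m) (Ys : 'I_m -> 'M[R]_(m, l) -> R -> set 'M[R]_(m, l))
    (p : 'M[R]_(m, l)) (i : 'I_m) (b : R) : set 'M[R]_(m, l) :=
  [set Y | [/\ is_plan adj i Y, Ys i p b Y &
     forall Y', is_plan adj i Y' -> Ys i p b Y' -> profit adj p i Y' <= profit adj p i Y]].

Definition l1norm (Y : 'M[R]_(m, l)) : R := \sum_j \sum_k `|Y j k|.

Definition assumption2 (adj : rel 'I_m) (Ys : 'I_m -> 'M[R]_(m, l) -> R -> set 'M[R]_(m, l))
    (b : 'I_m -> R) : Prop :=
  forall i : 'I_m,
    (forall p, nonneg_mx p -> Rdem adj Ys p i 0 = [set 0]) /\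
    (forall p, nonneg_mx p ->
        closed (Ys i p (b i) : set (matrix R m l)) /\ convex_set (Ys i p (b i) : set (convex_lmodType 'M[R]_(m, l)))) /\
    (0 < b i ->
      forall p, nonneg_mx p ->
        (forall j k, sim adj j i -> 0 < p j k -> p j k < p i k ->
           forall Y, Rdem adj Ys p i (b i) Y -> 0 < l1norm Y) /\
        (forall j k, sim adj j i -> 0 = p j k -> p j k < p i k ->
           Rdem adj Ys p i (b i) = set0)).

Definition assumption3 (e : 'M[R]_(m, l)) (b : 'I_m -> R) : Prop :=
  forall i, 0 < b i \/ (forall k, 0 < e i k).

Definition rational_agent (adj : rel 'I_m) (u : 'I_m -> 'rV[R]_l -> R)
    (Ys : 'I_m -> 'M[R]_(m, l) -> R -> set 'M[R]_(m, l)) (b : 'I_m -> R)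
    (e : 'M[R]_(m, l)) (x y : 'I_m -> 'M[R]_(m, l)) (p : 'M[R]_(m, l)) (i : 'I_m) : Prop :=
  Rdem adj Ys p i (b i) (y i) /\ Cdem adj u p i (wealth adj e p i (y i)) (x i).

Definition quasi_equilibrium (adj : rel 'I_m) (u : 'I_m -> 'rV[R]_l -> R)
    (Ys : 'I_m -> 'M[R]_(m, l) -> R -> set 'M[R]_(m, l)) (b : 'I_m -> R)
    (e : 'M[R]_(m, l)) (x y : 'I_m -> 'M[R]_(m, l)) (p : 'M[R]_(m, l)) : Prop :=
  [/\ nonneg_mx p,
      \sum_i \sum_k p i k = 1,
      (forall i, is_plan adj i (x i) /\ is_plan adj i (y i)),
      (forall i k, \sum_(j | simeq adj i j) x j i k + \sum_(j | simeq adj i j) y j i k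
                   = e i k + \sum_(j | simeq adj i j) y i j k) &
      (forall i, [/\ Rdem adj Ys p i (b i) (y i),
                     0 < wealth adj e p i (y i) -> Cdem adj u p i (wealth adj e p i (y i)) (x i) &
                     wealth adj e p i (y i) = 0 -> cost adj p i (x i) <= 0])].

Definition nonsatiable (u : 'I_m -> 'rV[R]_l -> R) (i : 'I_m) (k : 'I_l) : Prop :=
  forall (z : 'rV[R]_l) (d : R), (forall k', 0 <= z 0 k') -> 0 < d ->
    u i z < u i (z + d *: delta_mx 0 k).

(* a trade path between i and j: a (simple) path i = v0, v1, ..., vn = j in G
   whose internal nodes have positive resale bound; given as i :: s *)
Definition trade_path (adj : rel 'I_m) (b : 'I_m -> R) (i j : 'I_m) (s : seq 'I_m) : Prop :=
  [/\ path adj i s, last i s = j, uniq (i :: s) &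
      forall v, v \in take (size s).-1 s -> 0 < b v].

Definition onP (adj : rel 'I_m) (b : 'I_m -> R) (i j v : 'I_m) : Prop :=
  exists s, trade_path adj b i j s /\ v \in i :: s.

End Economy.

From HB Require Import structures.
From mathcomp Require Import all_boot all_order all_algebra.
From mathcomp Require Import all_classical all_reals all_analysis.
Import Order.TTheory GRing.Theory Num.Theory.
Local Open Scope ring_scope.

(* Positivity of the price of good k spreads from agent i along a trade path.
   If u_i is non-satiable in k, a rational i would take an extra free unit of
   k from any neighbour quoting price 0, so every price of k in i's
   neighbourhood is positive.  If a reseller v (b_v > 0) quotes p^v_k > 0 and
   a neighbour w quotes p^w_k = 0, Assumption 2(ii) makes R_v empty, which is
   impossible in a quasi-equilibrium; so positivity passes from each internal
   node of the path to the next. *)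

Lemma path_propagate {T : eqType} {e : rel T} {P Q : T -> Prop} {v : T} {s : seq T} :
  path e v s -> (forall w, w \in take (size s).-1 s -> Q w) ->
  (forall w w', Q w -> P w -> e w w' -> P w') ->
  P v -> (forall w, e v w -> P w) -> forall z, z \in v :: s -> P z.
Proof.
elim: s v => [|w s IH] v /= => [_ _ _ Pv _ z|/andP[evw ews] Qint step Pv Pnb z].
  by rewrite inE => /eqP->.
rewrite inE => /predU1P[-> //|zs].
have Pw := Pnb w evw.
case: s IH ews Qint zs => [|a s] IH ews Qint zs; first by move: zs; rewrite inE => /eqP->.
have Qw : Q w by apply: Qint; rewrite inE eqxx.
apply: (IH w) zs => // [w' w's|w']; last exact: step.
by apply: Qint; rewrite inE w's orbT.
Qed.

Section Economy.
Local Set Implicit Arguments.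
Variables (R : realType) (m l : nat) (adj : rel 'I_m).

Lemma is_plan_add_delta (i w : 'I_m) (k : 'I_l) (X : 'M[R]_(m, l)) :
  simeq adj i w -> is_plan adj i X -> is_plan adj i (X + delta_mx w k).
Proof.
move=> iw Xplan j0 k0; have [X_ge0 X_out] := Xplan j0 k0; rewrite !mxE; split.
  by rewrite addr_ge0 ?ler0n.
move=> ij0; rewrite X_out // add0r.
by case: eqP ij0 => [->|] //=; rewrite iw.
Qed.

Lemma cost_add_delta (p : 'M[R]_(m, l)) (i w : 'I_m) (k : 'I_l) (X : 'M[R]_(m, l)) :
  simeq adj i w -> cost adj p i (X + delta_mx w k) = cost adj p i X + p w k.
Proof.
move=> iw; have -> : cost adj p i (X + delta_mx w k)
                     = cost adj p i X + cost adj p i (delta_mx w k).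
  rewrite /cost -big_split; apply: eq_bigr => j0 _.
  by rewrite -big_split; apply: eq_bigr => k0 _; rewrite mxE mulrDr.
congr (_ + _); rewrite /cost (bigD1 w iw) /= (bigD1 k) //= !mxE !eqxx mulr1.
rewrite [X in _ + X + _]big1 => [|k0 k0k]; last by rewrite mxE (negbTE k0k) andbF mulr0.
rewrite big1 ?addr0 // => j0 /andP[_ j0w].
by apply: big1 => k0 _; rewrite mxE (negbTE j0w) mulr0.
Qed.

Lemma bundle_add_delta (i w : 'I_m) (k : 'I_l) (X : 'M[R]_(m, l)) :
  simeq adj i w -> bundle adj i (X + delta_mx w k) = bundle adj i X + delta_mx 0 k.
Proof.
move=> iw; apply/matrixP => a c; rewrite ord1 !mxE.
under eq_bigr do rewrite mxE; rewrite big_split /=; congr (_ + _).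
rewrite (bigD1 w iw) /= mxE eqxx big1 ?addr0 // => j0 /andP[_ j0w].
by rewrite mxE (negbTE j0w).
Qed.

Lemma Cdem_price_neq0 (u : 'I_m -> 'rV[R]_l -> R) (p : 'M[R]_(m, l))
    (i w : 'I_m) (k : 'I_l) (beta : R) (X : 'M[R]_(m, l)) :
  nonsatiable u i k -> Cdem adj u p i beta X -> simeq adj i w -> p w k != 0.
Proof.
move=> ns [Xplan Xcost Xopt] iw; apply/eqP => pw0.
have := Xopt _ (is_plan_add_delta w k iw Xplan).
rewrite cost_add_delta // pw0 addr0 => /(_ Xcost).
rewrite bundle_add_delta // -[delta_mx 0 k]scale1r; apply/negP; rewrite -ltNge.
apply: ns ltr01 => k'; rewrite mxE; apply: sumr_ge0 => j0 _; exact: (Xplan j0 k').1.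
Qed.

Lemma Rdem_neighbour_price_pos (Ys : 'I_m -> 'M[R]_(m, l) -> R -> set 'M[R]_(m, l))
    (b : 'I_m -> R) (p : 'M[R]_(m, l)) (v w : 'I_m) (k : 'I_l) (Y : 'M[R]_(m, l)) :
  simple_graph adj -> assumption2 adj Ys b -> nonneg_mx p -> Rdem adj Ys p v (b v) Y ->
  0 < b v -> 0 < p v k -> adj v w -> 0 < p w k.
Proof.
move=> [adjC adj_irr] A2 p_ge0 vY bv pv vw.
rewrite lt_def p_ge0 andbT; apply/eqP => pw0.
have [_ [_ /(_ bv p p_ge0) [_ R_empty]]] := A2 v.
have wv : sim adj w v.
  rewrite /sim /simeq adjC vw orbT /=; apply: contraTneq vw => ->; exact: adj_irr.
by move: vY; rewrite (R_empty w k wv) ?pw0.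
Qed.
End Economy.

Theorem lemmaA1 (R : realType) (m l : nat) (adj : rel 'I_m)
    (e : 'M[R]_(m, l)) (u : 'I_m -> 'rV[R]_l -> R)
    (b : 'I_m -> R) (Ys : 'I_m -> 'M[R]_(m, l) -> R -> set 'M[R]_(m, l))
    (x y : 'I_m -> 'M[R]_(m, l)) (p : 'M[R]_(m, l)) (i j : 'I_m) (k : 'I_l) :
  simple_graph adj ->
  nonneg_mx e ->
  (forall a (z : 'rV[R]_l), (forall k', 0 <= z 0 k') -> 0 <= u a z) ->
  (forall a, 0 <= b a) ->
  assumption2 adj Ys b ->
  assumption3 e b ->
  quasi_equilibrium adj u Ys b e x y p ->
  rational_agent adj u Ys b e x y p i ->
  (exists s, trade_path adj b i j s) ->
  nonsatiable u i k \/ (0 < b i /\ 0 < p i k) ->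
  forall jh, onP adj b i j jh -> 0 < p jh k.
Proof.
move=> G _ _ _ A2 _ [p_ge0 _ _ _ eqR] [_ iC] _ ik jh [s [[ipath _ _ s_int] jhs]].
have step w w' : 0 < b w -> 0 < p w k -> adj w w' -> 0 < p w' k.
  by have [wY _ _] := eqR w; exact: (Rdem_neighbour_price_pos w' k G A2 p_ge0 wY).
have [pi nb_pos] : 0 < p i k /\ forall w, adj i w -> 0 < p w k.
  case: ik => [ns|[bi pi]]; last by split=> // w; exact: step.
  have pos w : simeq adj i w -> 0 < p w k.
    by move=> iw; rewrite lt_def p_ge0 andbT (Cdem_price_neq0 w ns iC iw).
  by split=> [|w iw]; apply: pos; rewrite /simeq ?eqxx ?iw ?orbT.
exact: path_propagate ipath s_int step pi nb_pos jh jhs.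
Qed.
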